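(* Assume conditions (G) and (B) hold and let $\alpha\in(0,1)$ satisfy $r_n<\alpha$ and $\alpha+2r_n<1$. Let $r_n'=2r_n+\delta_n$. Then with probability at least $1-\alpha-r_n'$, $$V(\pi)\ge LV_{1-\alpha}(\pi):=\widehat V(\pi)-\widehat q_{1-\alpha,\Pi}\,\widehat s(\pi)\quad\text{for all }\pi\in\Pi;$$ equivalently, $\max_{\pi\in\Pi}\widehat Z_\pi\le\widehat q_{1-\alpha,\Pi}$ with probability at least $1-\alpha-r_n'$.
   Context: Setting. $\Pi$ is a finite nonempty set of policies. $V:\Pi\to\mathbb R$ is a deterministic welfare function; on a probability space (the data), $(\widehat V(\pi))_{\pi\in\Pi}$ are real random variables and $(\widehat s(\pi))_{\pi\in\Pi}$ strictly positive random variables. $\widehat Z_\pi=(\widehat V(\pi)-V(\pi))/\widehat s(\pi)$. $(Z_\pi)_{\pi\in\Pi}$ is a centered Gaussian vector with $\mathrm{Var}(Z_\pi)=1$ for all $\pi$. $\mathcal A$ is the collection of rectangles in $\mathbb R^\Pi$ (products of possibly unbounded intervals). Condition (G): there is $r_n\ge0$ with $|\Pr((\widehat Z_\pi)_\pi\in A)-\Pr((Z_\pi)_\pi\in A)|\le r_n$ for all $A\in\mathcal A$. Bootstrap: $\widehat C$ is a data-dependent positive semidefinite $|\Pi|\times|\Pi|$ matrix; conditionally on the data, $(\widehat Z^*_\pi)_{\pi\in\Pi}\sim N(0,\widehat C)$, and $\Pr^*$ denotes this conditional probability given the data. Condition (B): there is $\delta_n\in[0,1]$ such that, with probability at least $1-\delta_n$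 over the data, $|\Pr^*((\widehat Z^*_\pi)_\pi\in A)-\Pr((Z_\pi)_\pi\in A)|\le r_n$ for all $A\in\mathcal A$. Quantiles: for $\tau\in(0,1)$ the $\tau$-quantile of $X$ under $P$ is $\inf\{x:P(X\le x)\ge\tau\}$. $\widehat q_{\tau,\Pi}$ is the $\tau$-quantile of $\max_{\pi\in\Pi}\widehat Z^*_\pi$ under $\Pr^*$. *)

From HB Require Import structures.
From mathcomp Require Import all_boot all_order all_algebra.
From mathcomp Require Import all_classical all_reals all_analysis.
Set Implicit Arguments. Unset Strict Implicit. Unset Printing Implicit Defensive.
Import Order.TTheory GRing.Theory Num.Theory.
Local Open Scope classical_set_scope.
Local Open Scope ring_scope.

Definition centered_normal_law {R : realType} (mu : set R -> \bar R) (v : R) : Prop :=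
  0 <= v /\
  forall A : set R, measurable A ->
    mu A = (if v == 0 then \d_(0:R) A else normal_prob 0 (Num.sqrt v) A).

Definition centered_gaussian_vector {d} {T : measurableType d} {R : realType}
  (Q : probability T R) (Pi : finType) (X : Pi -> T -> R) (C : Pi -> Pi -> R) : Prop :=
  (forall p, measurable_fun setT (X p)) /\
  forall t : Pi -> R,
    centered_normal_law (fun A => Q ((fun w => \sum_p t p * X p w) @^-1` A))
                        (\sum_p \sum_q t p * t q * C p q).

Definition rect_prob {d} {T : measurableType d} {R : realType}
  (Q : probability T R) (Pi : finType) (X : Pi -> T -> R) (I : Pi -> interval R) : R :=
  fine (Q [set w | forall p, X p w \in I p]).

Definition maxf {R : realType} (Pi : finType) (f : Pi -> R) : R := sup (range f).

Definition quantile {d} {T : measurableType d} {R : realType}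
  (Q : probability T R) (X : T -> R) (tau : R) : R :=
  inf [set x : R | (tau%:E <= Q [set w | (X w <= x)%R])%E].

From HB Require Import structures.
From mathcomp Require Import all_boot all_order all_algebra.
From mathcomp Require Import all_classical all_reals all_analysis.
From mathcomp Require Import lra measurable_realfun.
Import Order.TTheory GRing.Theory Num.Theory.
Local Open Scope classical_set_scope.
Local Open Scope ring_scope.

(* Let M be the maximum of the limiting Gaussian vector and c its
   (1 - alpha - r_n)-quantile; right continuity of the cdf of M gives
   P(M <= c) >= 1 - alpha - r_n.  On the event of condition (B) the cdf of the
   bootstrap maximum is within r_n of that of M, which forces the bootstrap
   (1 - alpha)-quantile above c.  Condition (G) on the orthant ]-oo, c]^Pi gives
   P(max_p Zhat_p <= c) >= 1 - alpha - 2 r_n, and intersecting with the event of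
   (B) costs at most delta_n.  Gaussianity enters only through measurability of
   the coordinates. *)

Lemma probability_setI_ge {d} {T : measurableType d} {R : realType}
    (P : probability T R) {A B : set T} : measurable A -> measurable B ->
  fine (P A) + fine (P B) - 1 <= fine (P (A `&` B)).
Proof.
move=> mA mB.
have : fine (P A) + fine (P B) - fine (P (A `&` B)) <= 1.
  have mAB := measurableI _ _ mA mB.
  rewrite -lee_fin EFinB EFinD !fineK ?fin_num_measure//.
  have := probability_le1 P (measurableU _ _ mA mB).
  by rewrite measureUfinl ?(le_lt_trans (probability_le1 P mA)) ?ltry.
lra.
Qed.

Section maxf.
Context {R : realType} {Pi : finType} (p0 : Pi).

Lemma maxf_le (f : Pi -> R) x : maxf f <= x <-> forall p, f p <= x.
Proof.
have ub_f : has_ubound (range f).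
  exists (\sum_q `|f q|) => _ [p _ <-].
  by rewrite (le_trans (ler_norm _))// (bigD1 p)//= lerDl sumr_ge0.
split=> [fx p|fx]; first by rewrite (le_trans _ fx)// (ub_le_sup ub_f)//; exists p.
by apply: ge_sup; [exists (f p0), p0 | move=> _ [p _ <-]].
Qed.

Lemma maxf_bigmax (f : Pi -> R) : maxf f = \big[Num.max/f p0]_p f p.
Proof.
apply/eqP; rewrite eq_le; apply/andP; split.
  by apply/maxf_le => p; rewrite le_bigmax_cond.
by apply/bigmax_leP; split=> [|p _]; apply: (maxf_le f (maxf f)).1.
Qed.

End maxf.

Section max_random_variable.
Context {d} {T : measurableType d} {R : realType} (P : probability T R).
Context {Pi : finType} (p0 : Pi) (X : Pi -> T -> R).
Hypothesis mX : forall p, measurable_fun setT (X p).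

Lemma measurable_fun_maxf : measurable_fun setT (fun u => maxf (X^~ u)).
Proof.
rewrite (_ : (fun u => _) = fun u => \big[Num.max/X p0 u]_(p <- enum Pi) X p u).
  elim: (enum Pi) => [|p s IHs]; first by under eq_fun do rewrite big_nil; exact: mX.
  by under eq_fun do rewrite big_cons; exact: measurable_maxr.
by apply/funext => u; rewrite (maxf_bigmax p0) big_enum.
Qed.

Definition maxRV : {RV P >-> R} := mfun_Sub (mem_set measurable_fun_maxf).

Lemma measurable_orthant (b : Pi -> R) :
  measurable [set u | forall p, X p u \in `]-oo, b p]].
Proof.
rewrite (_ : [set u | _] = \bigcap_(p in [set: Pi]) (X p @^-1` `]-oo, b p])).
  apply: fin_bigcap_measurable => [|p _]; first exact: finite_finset.
  by rewrite -[_ @^-1` _]setTI; exact: mX.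
by apply/seteqP; split=> [u Xu p _|u Xu p]; exact: Xu.
Qed.

Lemma rect_prob_maxRV x :
  rect_prob P X (fun=> `]-oo, x]) = fine (cdf maxRV x).
Proof.
congr (fine (P _)); apply/seteqP; split=> u /=; rewrite in_itv/=.
- by move=> Xu; apply/(maxf_le p0) => p; move: (Xu p); rewrite in_itv.
- by move=> /(maxf_le p0) Xu p; rewrite in_itv/= Xu.
Qed.

End max_random_variable.

Section quantile.
Context {d} {T : measurableType d} {R : realType} (P : probability T R).
Variable X : {RV P >-> R}.
Local Notation level tau := [set x | (tau%:E <= cdf X x)%E].

Lemma quantileE tau : quantile P X tau = inf (level tau).
Proof.
by [].
Qed.

Lemma cdf_level_neq0 tau : tau < 1 -> level tau !=set0.
Proof.
move=> tau1; have /fine_cvgP[_ cdf1] := cvg_cdfy1 X.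
have [x /ltW] := filter_ex (cvgr_gt _ cdf1 _ tau1).
by exists x; rewrite /= -[cdf X x]fineK ?fin_num_measure.
Qed.

Lemma cdf_level_lbound tau : 0 < tau -> has_lbound (level tau).
Proof.
move=> tau0; have /fine_cvgP[_ cdf0] := cvg_cdfNy0 X.
have [x0 Fx0] := filter_ex (cvgr_lt _ cdf0 _ tau0).
exists x0 => x /= tau_le_Fx; rewrite leNgt; apply/negP => /ltW /(cdf_nondecreasing X).
rewrite -[cdf X x0]fineK ?fin_num_measure // => Fx_le.
by have := le_trans tau_le_Fx Fx_le; rewrite lee_fin leNgt Fx0.
Qed.

Lemma cdf_quantile tau : 0 < tau < 1 -> (tau%:E <= cdf X (quantile P X tau))%E.
Proof.
case/andP=> tau0 tau1; rewrite quantileE.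
set c := inf _; have <- : lim (cdf X x @[x --> c^'+]) = cdf X c.
  exact/cvg_lim/cdf_right_continuous.
apply: lime_ge; first by apply/cvg_ex; exists (cdf X c); exact: cdf_right_continuous.
near=> x; have cx : c < x by near: x; exact: nbhs_right_gt.
have [y tau_le_Fy yx] := inf_lt (cdf_level_neq0 _ tau1) cx.
by rewrite (le_trans tau_le_Fy)// cdf_nondecreasing// ltW.
Unshelve. all: by end_near.
Qed.

End quantile.

Lemma le_quantile_shift {d1 d2} {T1 : measurableType d1} {T2 : measurableType d2}
    {R : realType} (P1 : probability T1 R) (P2 : probability T2 R)
    (X1 : {RV P1 >-> R}) (X2 : {RV P2 >-> R}) (r tau : R) :
  (forall x, fine (cdf X1 x) <= fine (cdf X2 x) + r) -> 0 < tau - r -> tau < 1 ->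
  quantile P2 X2 (tau - r) <= quantile P1 X1 tau.
Proof.
move=> cdf12 tau_r0 tau1; rewrite !quantileE.
apply: lb_le_inf; first exact: cdf_level_neq0.
move=> x /= tau_le_F1x; apply: ge_inf; first exact: cdf_level_lbound.
rewrite /= -[cdf X2 x]fineK ?fin_num_measure// lee_fin lerBlDr.
by rewrite (le_trans _ (cdf12 x))// -lee_fin fineK ?fin_num_measure.
Qed.

Theorem proposition2
  (R : realType) (Pi : finType) (Pi_ne : (0 < #|Pi|)%N)
  (V : Pi -> R)
  (* the data *)
  (dO : measure_display) (Omega : measurableType dO) (P : probability Omega R)
  (Vhat shat : Pi -> Omega -> R)
  (Vhat_meas : forall p, measurable_fun setT (Vhat p))
  (shat_meas : forall p, measurable_fun setT (shat p))
  (shat_pos : forall p w, 0 < shat p w)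
  (* the limiting Gaussian vector Z *)
  (dZ : measure_display) (TZ : measurableType dZ) (QZ : probability TZ R)
  (Z : Pi -> TZ -> R) (CZ : Pi -> Pi -> R)
  (Z_gauss : centered_gaussian_vector QZ Z CZ)
  (Z_var1 : forall p, CZ p p = 1)
  (* the bootstrap: given the data w, (Zs w p)_p ~ N(0, Chat w) under Qs *)
  (Chat : Omega -> Pi -> Pi -> R)
  (Chat_sym : forall w p q, Chat w p q = Chat w q p)
  (Chat_psd : forall w (t : Pi -> R), 0 <= \sum_p \sum_q t p * t q * Chat w p q)
  (dS : measure_display) (TS : measurableType dS) (Qs : probability TS R)
  (Zs : Omega -> Pi -> TS -> R)
  (Zs_gauss : forall w, centered_gaussian_vector Qs (Zs w) (Chat w))
  (rn deltan alpha : R)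
  (rn_ge0 : 0 <= rn)
  (deltan01 : 0 <= deltan <= 1)
  (* condition (G) *)
  (condG : forall I : Pi -> interval R,
     `| rect_prob P (fun p w => (Vhat p w - V p) / shat p w) I - rect_prob QZ Z I | <= rn)
  (* condition (B) *)
  (condB : exists E : set Omega, measurable E /\ ((1 - deltan)%:E <= P E)%E /\
     forall w, E w -> forall I : Pi -> interval R,
       `| rect_prob Qs (Zs w) I - rect_prob QZ Z I | <= rn)
  (alpha01 : 0 < alpha < 1)
  (rn_lt_alpha : rn < alpha)
  (alpha_2rn : alpha + 2 * rn < 1) :
  let qhat := fun w => quantile Qs (fun u => maxf (fun p => Zs w p u)) (1 - alpha) in
  exists F : set Omega, measurable F /\
    F `<=` [set w | forall p, Vhat p w - qhat w * shat p w <= V p] /\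
    ((1 - alpha - (2 * rn + deltan))%:E <= P F)%E.

Proof.
move=> qhat; have [p0 _] := card_gt0P Pi_ne; have [mZ _] := Z_gauss.
pose MZ := maxRV QZ p0 Z mZ; pose c := quantile QZ MZ (1 - alpha - rn).
have c_cdf : 1 - alpha - rn <= fine (cdf MZ c).
  rewrite -lee_fin fineK ?fin_num_measure//; apply: cdf_quantile; lra.
have [E [mE [PE bootE]]] := condB.
have c_le_qhat w : E w -> c <= qhat w.
  move=> Ew; have [mZs _] := Zs_gauss w.
  apply: (le_quantile_shift _ _ (maxRV Qs p0 (Zs w) mZs)); [|lra|lra].
  move=> x; have := bootE w Ew (fun=> `]-oo, x]).
  by rewrite (rect_prob_maxRV _ p0 _ mZs) (rect_prob_maxRV _ p0 _ mZ) => /ler_normlP[_]; lra.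
pose A := [set w | forall p, (Vhat p w - V p) / shat p w \in `]-oo, c]].
have A_iff w p : (Vhat p w - V p) / shat p w \in `]-oo, c] <-> Vhat p w - c * shat p w <= V p.
  by rewrite in_itv/= ler_pdivrMr//; split; lra.
have mA : measurable A.
  rewrite (_ : A = [set w | forall p, Vhat p w - c * shat p w \in `]-oo, V p]]).
    apply: (measurable_orthant (fun p w => Vhat p w - c * shat p w)) => p.
    by apply: measurable_funB => //; exact: measurable_funM.
  by apply/seteqP; split=> w Aw p; [rewrite in_itv/=; apply/A_iff | apply/A_iff];
    move: (Aw p); rewrite in_itv.
have PA : 1 - alpha - 2 * rn <= fine (P A).
  have := condG (fun=> `]-oo, c]); rewrite (rect_prob_maxRV _ p0 _ mZ) => /ler_normlP[+ _].
  rewrite /rect_prob -/A; lra.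
have mAE := measurableI _ _ mA mE.
exists (A `&` E); split=> //.
split=> [w [Aw Ew] p /=|].
  have := (A_iff w p).1 (Aw p); have := c_le_qhat w Ew.
  have := shat_pos p w; nra.
rewrite -(fineK (fin_num_measure P _ mAE)) lee_fin.
move: PE; rewrite -(fineK (fin_num_measure P _ mE)) lee_fin.
by have := probability_setI_ge P mA mE; lra.
Qed.
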